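(* Let $X$ be a real Hilbert space and let $A,B$ be closed convex nonempty subsets of $X$ such that the sets $E$ and $F$ (defined in the context) are nonempty. Consider the following conditions: (i) the couple $(A,B)$ is regular; (ii) the couple $(A,B)$ is boundedly regular; (iii) the couple $(A,B)$ is linearly regular for points bounded away from $E$. Then (iii) $\Leftrightarrow$ (i) $\Rightarrow$ (ii). Moreover, if $E$ is bounded, then (ii) $\Rightarrow$ (i).
   Context: For nonempty sets $S,T\subset X$: $\mathrm{dist}(x,S)=\inf_{s\in S}\|x-s\|$ and $\mathrm{dist}(S,T)=\inf_{s\in S}\mathrm{dist}(s,T)$. Define $E=\{a\in A:\ \mathrm{dist}(a,B)=\mathrm{dist}(A,B)\}$, $F=\{b\in B:\ \mathrm{dist}(b,A)=\mathrm{dist}(A,B)\}$, and let $v=P_{\overline{B-A}}(0)$ (the metric projection of $0$ onto the closure of $B-A=\{b-a: b\in B, a\in A\}$), called the displacement vector. The couple $(A,B)$ (with $E,F$ nonempty) is called: (1) regular if for each $\epsilon>0$ there is $\delta>0$ such that $\mathrm{dist}(x,E)\le\epsilon$ whenever $x\in X$ satisfies $\max\{\mathrm{dist}(x,A),\mathrm{dist}(x,B-v)\}\le\delta$; (2) boundedly regular if for each bounded set $S\subset X$ and each $\epsilon>0$ there is $\delta>0$ such that $\mathrm{dist}(x,E)\le\epsilon$ whenever $x\in S$ satisfies $\max\{\mathrm{dist}(x,A),\mathrm{dist}(x,B-v)\}\le\delta$; (3) linearly regular for points bounded away from $E$ if for each $\epsilon>0$ there is $K>0$ such that $\mathrm{dist}(x,E)\le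 K\max\{\mathrm{dist}(x,A),\mathrm{dist}(x,B-v)\}$ whenever $x\in X$ satisfies $\mathrm{dist}(x,E)\ge\epsilon$. *)

From HB Require Import structures.
From mathcomp Require Import all_boot all_order all_algebra.
From mathcomp Require Import all_classical all_reals all_analysis.
Set Implicit Arguments. Unset Strict Implicit. Unset Printing Implicit Defensive.
Import Order.TTheory GRing.Theory Num.Theory.
Import numFieldNormedType.Exports.
Local Open Scope classical_set_scope.
Local Open Scope ring_scope.

(* A real Hilbert space: a complete normed space V over R whose norm comes
   from an inner product [ip] (symmetric, bilinear, with |x|^2 = <x,x>). *)
Definition hilbert_inner (R : realType) (V : completeNormedModType R)
  (ip : V -> V -> R) : Prop :=
  [/\ forall x y, ip x y = ip y x,
      forall a x y z, ip (a *: x + y) z = a * ip x z + ip y z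
    & forall x, `|x| ^+ 2 = ip x x].

Definition convex (R : realType) (V : completeNormedModType R) (A : set V) :=
  forall x y (t : R), A x -> A y -> 0 <= t -> t <= 1 -> A (t *: x + (1 - t) *: y).

Definition dist (R : realType) (V : completeNormedModType R) (x : V) (S : set V) : R :=
  inf [set `|x - s| | s in S].

Definition dist_set (R : realType) (V : completeNormedModType R) (S T : set V) : R :=
  inf [set dist s T | s in S].

Definition setE (R : realType) (V : completeNormedModType R) (A B : set V) : set V :=
  [set a | A a /\ dist a B = dist_set A B].

Definition setF (R : realType) (V : completeNormedModType R) (A B : set V) : set V :=
  [set b | B b /\ dist b A = dist_set A B].

Definition set_diff (R : realType) (V : completeNormedModType R) (B A : set V) : set V :=
  [set b - a | b in B & a in A].

Definition translate_neg (R : realType) (V : completeNormedModType R) (S : set V) (v : V) : set V :=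
  [set s - v | s in S].

Definition is_metric_proj (R : realType) (V : completeNormedModType R) (C : set V) (x p : V) :=
  C p /\ forall c, C c -> `|x - p| <= `|x - c|.

Definition is_displacement (R : realType) (V : completeNormedModType R) (A B : set V) (v : V) :=
  is_metric_proj (closure (set_diff B A)) 0 v.

Definition regular (R : realType) (V : completeNormedModType R) (A B : set V) (v : V) :=
  forall eps : R, 0 < eps -> exists2 delta : R, 0 < delta &
    forall x : V, Num.max (dist x A) (dist x (translate_neg B v)) <= delta ->
      dist x (setE A B) <= eps.

Definition boundedly_regular (R : realType) (V : completeNormedModType R) (A B : set V) (v : V) :=
  forall S : set V, bounded_set S ->
  forall eps : R, 0 < eps -> exists2 delta : R, 0 < delta &
    forall x : V, S x -> Num.max (dist x A) (dist x (translate_neg B v)) <= delta ->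
      dist x (setE A B) <= eps.

Definition linearly_regular_away (R : realType) (V : completeNormedModType R) (A B : set V) (v : V) :=
  forall eps : R, 0 < eps -> exists2 K : R, 0 < K &
    forall x : V, eps <= dist x (setE A B) ->
      dist x (setE A B) <= K * Num.max (dist x A) (dist x (translate_neg B v)).

From HB Require Import structures.
From mathcomp Require Import all_boot all_order all_algebra.
From mathcomp Require Import all_classical all_reals all_analysis.
From mathcomp Require Import ring lra.
Import Order.TTheory GRing.Theory Num.Theory.
Import numFieldNormedType.Exports.
Local Open Scope classical_set_scope.
Local Open Scope ring_scope.

(* The heart of the matter is that every point e of E lies at distance 0 from
   B - v.  Indeed dist(e, B) = dist(A, B) <= |v|, so there are b in B with
   b - e a near-minimizer of the norm on the convex set B - A; by the
   parallelogram law all near-minimizers of the norm on a convex set are close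
   to each other, hence b - e is close to v.
   Consequently m(x) := max(dist(x, A), dist(x, B - v)) is convex and vanishes
   on E, so m(e + l (x - e)) <= l m(x) for e in E and 0 <= l <= 1.  Pulling x
   towards a near-nearest point of E down to distance about eps from E turns
   the delta of regularity into a linear bound, and pulling x towards a fixed
   point of E into a fixed ball reduces regularity to bounded regularity when
   E is bounded. *)

Section Distance.
Context {R : realType} {V : completeNormedModType R}.
Implicit Types (x y p s : V) (S C : set V).

Lemma dist_ge0 x S : 0 <= dist x S.
Proof.
have [[s Ss]|S0] := pselect (S !=set0); last first.
  rewrite /dist (_ : [set `|x - t| | t in S] = set0) ?inf0 //.
  by apply/seteqP; split => // y [s Ss _]; case: S0; exists s.
apply: lb_le_inf; first by exists `|x - s|; exists s.
by move=> _ [t _ <-].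
Qed.

Lemma dist_le x {S s} : S s -> dist x S <= `|x - s|.
Proof. by move=> Ss; apply: ge_inf; [exists 0 => _ [t _ <-] | exists s]. Qed.

Lemma dist_mem0 x {S} : S x -> dist x S = 0.
Proof.
move=> Sx; apply/eqP; rewrite eq_le dist_ge0 andbT.
by have := dist_le x Sx; rewrite subrr normr0.
Qed.

Lemma dist_ge x S c : S !=set0 -> (forall s, S s -> c <= `|x - s|) -> c <= dist x S.
Proof.
move=> [s Ss] lbS; apply: lb_le_inf; first by exists `|x - s|; exists s.
by move=> _ [t St <-]; exact: lbS.
Qed.

Lemma dist_approx x {S} e : S !=set0 -> 0 < e -> exists2 s, S s & `|x - s| < dist x S + e.
Proof.
move=> [s Ss] e0.
have infS : has_inf [set `|x - t| | t in S].
  by split; [exists `|x - s|; exists s | exists 0 => _ [t _ <-]].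
by have [_ [t St <-]] := inf_adherent e0 infS; exists t.
Qed.

Lemma dist_lipschitz x y {S} : S !=set0 -> dist x S <= `|x - y| + dist y S.
Proof.
move=> S0; rewrite -lerBlDl; apply: dist_ge => // s Ss.
by rewrite lerBlDl; apply: le_trans (dist_le x Ss) (ler_distD y x s).
Qed.

Lemma segment_subr (l : R) x p : l *: x + (1 - l) *: p - p = l *: (x - p).
Proof. by rewrite scalerBl scale1r scalerBr addrA addrAC addrK. Qed.

Lemma subr_segment (l : R) x p : x - (l *: x + (1 - l) *: p) = (1 - l) *: (x - p).
Proof.
have -> : x - (l *: x + (1 - l) *: p) = (x - p) - (l *: x + (1 - l) *: p - p).
  by rewrite opprB addrA subrK.
by rewrite segment_subr scalerBl scale1r.
Qed.

Lemma dist_convex {C} x p (l : R) : convex C -> C !=set0 -> 0 <= l <= 1 ->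
  dist (l *: x + (1 - l) *: p) C <= l * dist x C + (1 - l) * dist p C.
Proof.
move=> cC C0 /andP[l0 l1]; have l1' : 0 <= 1 - l by rewrite subr_ge0.
apply/ler_addgt0Pr => e e0.
have [c1 Cc1 xc1] := dist_approx x e C0 e0.
have [c2 Cc2 pc2] := dist_approx p e C0 e0.
apply: le_trans (dist_le _ (cC _ _ _ Cc1 Cc2 l0 l1)) _.
have -> : l *: x + (1 - l) *: p - (l *: c1 + (1 - l) *: c2)
        = l *: (x - c1) + (1 - l) *: (p - c2).
  by rewrite !scalerBr opprD addrACA.
apply: le_trans (ler_normD _ _) _.
rewrite !normrZ (ger0_norm l0) (ger0_norm l1').
have := ler_wpM2l l0 (ltW xc1); have := ler_wpM2l l1' (ltW pc2); lra.
Qed.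

Lemma convex_translate_neg {C} v : convex C -> convex (translate_neg C v).
Proof.
move=> cC x y t [a Ca <-] [b Cb <-] t0 t1; exists (t *: a + (1 - t) *: b); first exact: cC.
by rewrite !scalerBr addrACA -opprD -scalerDl addrCA subrr addr0 scale1r.
Qed.

Lemma convex_set_diff {C D} : convex C -> convex D -> convex (set_diff D C).
Proof.
move=> cC cD _ _ t [d1 Dd1 [c1 Cc1 <-]] [d2 Dd2 [c2 Cc2 <-]] t0 t1.
exists (t *: d1 + (1 - t) *: d2); first exact: cD.
exists (t *: c1 + (1 - t) *: c2); first exact: cC.
by rewrite !scalerBr opprD addrACA.
Qed.

Lemma bounded_norm_ball (c : V) (r : R) : bounded_set [set x | `|x - c| <= r].
Proof.
exists (r + `|c|); split; first exact: num_real.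
move=> M rcM x /= xc; have := ler_distD c x 0; rewrite !subr0; lra.
Qed.

End Distance.

Section Hilbert.
Context {R : realType} {V : completeNormedModType R} {ip : V -> V -> R}.
Hypothesis ipH : hilbert_inner ip.

Lemma parallelogram (x y : V) :
  `|x + y| ^+ 2 + `|x - y| ^+ 2 = 2 * `|x| ^+ 2 + 2 * `|y| ^+ 2.
Proof.
have [ipC ipL ipN] := ipH.
have ipD a b z : ip (a + b) z = ip a z + ip b z.
  by have := ipL 1 a b z; rewrite scale1r mul1r.
have ipNl a z : ip (- a) z = - ip a z.
  have ip0 : ip 0 z = 0 by have := ipL 1 0 0 z; rewrite scaler0 addr0 mul1r; lra.
  by have := ipL (-1) a 0 z; rewrite scaleN1r addr0 ip0 addr0 mulN1r.
rewrite !ipN !ipD !ipNl (ipC x (x + y)) (ipC y (x + y)) (ipC x (x - y)) (ipC y (x - y)).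
rewrite !ipD !ipNl (ipC x y); ring.
Qed.

Lemma near_min_norm_sqr_dist {C : set V} {N eta : R} {u w : V} :
  convex C -> 0 <= N -> (forall z, C z -> N <= `|z|) -> C u -> C w ->
  `|u| <= N + eta -> `|w| <= N + eta -> `|w - u| ^+ 2 <= 4 * eta * (2 * N + eta).
Proof.
move=> cC N0 minN Cu Cw uN wN.
have half0 : (0 : R) <= 2^-1 by rewrite invr_ge0.
have half1 : (2^-1 : R) <= 1 by rewrite invf_le1 // ler1n.
have /minN : C (2^-1 *: w + (1 - 2^-1) *: u) by exact: cC.
have -> : (1 - 2^-1 : R) = 2^-1 by field.
rewrite -scalerDr normrZ ger0_norm // => midN.
have : (2 * N) ^+ 2 <= `|w + u| ^+ 2 by rewrite lerXn2r ?nnegrE ?mulr_ge0 //; lra.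
have := parallelogram w u; have := normr_ge0 u; have := normr_ge0 w; nra.
Qed.

End Hilbert.

Section Displacement.
Context {R : realType} {V : completeNormedModType R} {ip : V -> V -> R}.
Context {A B : set V} {v : V}.
Hypotheses (ipH : hilbert_inner ip) (cA : convex A) (cB : convex B) (B0 : B !=set0).
Hypothesis displacement_v : is_displacement A B v.

Lemma norm_displacement_le w : set_diff B A w -> `|v| <= `|w|.
Proof.
move=> Dw; have [_ projv] := displacement_v.
by have := projv w (subset_closure Dw); rewrite !sub0r !normrN.
Qed.

Lemma displacement_approx {eta} : 0 < eta -> exists2 u, set_diff B A u & `|v - u| < eta.
Proof.
move=> eta0; have [vD _] := displacement_v.
have [u [Du]] := vD (ball v eta) (nbhsx_ballx v eta eta0).
by rewrite -ball_normE /ball_ => vu; exists u.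
Qed.

Lemma dist_set_le_norm_displacement : dist_set A B <= `|v|.
Proof.
apply/ler_addgt0Pr => eta eta0.
have [_ [b Bb [a Aa <-]] vba] := displacement_approx eta0.
have distAB : dist_set A B <= dist a B.
  by apply: ge_inf; [exists 0 => _ [s _ <-]; exact: dist_ge0 | exists a].
apply: le_trans distAB _; apply: le_trans (dist_le a Bb) _.
have := ler_distD v (b - a) 0; rewrite !subr0 (distrC a) (distrC (b - a)); lra.
Qed.

Lemma setE_dist_translate_neg e : setE A B e -> dist e (translate_neg B v) = 0.
Proof.
move=> [Ae distE]; apply/eqP; rewrite eq_le dist_ge0 andbT.
apply/ler_addgt0Pr => tau tau0; rewrite add0r.
pose c := 16 * (2 * `|v| + 1).
have c0 : 0 < c by rewrite /c; have := normr_ge0 v; lra.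
pose eta := Num.min 1 (Num.min (tau / 2) (tau ^+ 2 / c)).
have eta0 : 0 < eta by rewrite !lt_min ltr01 !divr_gt0 // exprn_gt0.
have eta1 : eta <= 1 by rewrite ge_min lexx.
have eta_tau : eta <= tau / 2 by rewrite !ge_min lexx orbT.
have eta_c : eta * c <= tau ^+ 2 by rewrite -ler_pdivlMr // !ge_min lexx !orbT.
have [b Bb eb] := dist_approx e eta B0 eta0.
have [u Du vu] := displacement_approx eta0.
have Dbe : set_diff B A (b - e) by exists b => //; exists e.
have be_le : `|b - e| <= `|v| + eta.
  have := dist_set_le_norm_displacement; rewrite distrC in eb; lra.
have u_le : `|u| <= `|v| + eta.
  have := ler_distD v u 0; rewrite !subr0 (distrC u); lra.
have close : `|b - e - u| ^+ 2 <= (tau / 2) ^+ 2.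
  have := near_min_norm_sqr_dist ipH (convex_set_diff cA cB) (normr_ge0 v)
    norm_displacement_le Du Dbe u_le be_le.
  rewrite /c in eta_c; nra.
have {}close : `|b - e - u| <= tau / 2.
  by rewrite -(ler_pXn2r (n := 2)) // nnegrE // divr_ge0 // ltW.
apply: le_trans (dist_le e (_ : translate_neg B v (b - v))) _; first by exists b.
have -> : e - (b - v) = v - (b - e) by rewrite !opprB addrCA.
have := ler_distD u v (b - e); rewrite (distrC u); lra.
Qed.

End Displacement.

Section Regularity.
Context {R : realType} {V : completeNormedModType R} {A B : set V} {v : V}.

Local Notation E := (setE A B).
Local Notation dmax x := (Num.max (dist x A) (dist x (translate_neg B v))).

Lemma dmax_ge0 x : 0 <= dmax x.
Proof. by rewrite le_max dist_ge0. Qed.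

Lemma linearly_regular_away_regular : linearly_regular_away A B v -> regular A B v.
Proof.
move=> linreg eps eps0; have [K K0 linK] := linreg eps eps0.
exists (eps / (2 * K)); first by rewrite divr_gt0 // mulr_gt0.
move=> x dmax_x; have [/ltW //|far] := ltP (dist x E) eps.
have := linK x far; have := ler_wpM2l (ltW K0) dmax_x.
have -> : K * (eps / (2 * K)) = eps / 2 by field; rewrite gt_eqF.
lra.
Qed.

Lemma regular_boundedly_regular : regular A B v -> boundedly_regular A B v.
Proof. by move=> reg S _ eps /reg[delta delta0 regd]; exists delta => // x _ /regd. Qed.

Hypotheses (cA : convex A) (cB : convex B) (A0 : A !=set0) (B0 : B !=set0).
Hypotheses (E0 : E !=set0) (dist_setE_translate : forall e, E e -> dist e (translate_neg B v) = 0).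

Lemma dmax_segment_le x e (l : R) : E e -> 0 <= l <= 1 ->
  dmax (l *: x + (1 - l) *: e) <= l * dmax x.
Proof.
move=> Ee l01; have [Ae _] := Ee; have /andP[l0 _] := l01.
have Bv0 : translate_neg B v !=set0 by case: B0 => b Bb; exists (b - v), b.
have dA := dist_convex x e l cA A0 l01.
have dB := dist_convex x e l (convex_translate_neg v cB) Bv0 l01.
rewrite (dist_mem0 e Ae) mulr0 addr0 in dA.
rewrite (dist_setE_translate e Ee) mulr0 addr0 in dB.
by rewrite ge_max (le_trans dA) ?(le_trans dB) // ler_wpM2l // le_max lexx ?orbT.
Qed.

Lemma regular_linearly_regular_away : regular A B v -> linearly_regular_away A B v.
Proof.
move=> reg eps eps0.
have [delta delta0 regd] := reg (eps / 2) (divr_gt0 eps0 (ltr0Sn _ 1)).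
exists (eps / delta); first by rewrite divr_gt0.
move=> x far.
have [e Ee xe] := dist_approx x (eps / 4) E0 (divr_gt0 eps0 (ltr0Sn _ 3)).
set r := `|x - e| in xe.
have xEr : dist x E <= r := dist_le x Ee.
have r0 : 0 < r by lra.
pose l := (3 * eps / 4) / r.
have lr : l * r = 3 * eps / 4 by rewrite mulfVK // lt0r_neq0.
have l0 : 0 <= l by apply: divr_ge0; lra.
have l1 : l <= 1 by rewrite ler_pdivrMr // mul1r; lra.
set y := l *: x + (1 - l) *: e.
have yE : eps / 2 < dist y E.
  have := dist_lipschitz x y E0.
  rewrite subr_segment normrZ ger0_norm ?subr_ge0 // mulrBl mul1r lr -/r; lra.
have dmax_y : delta < dmax y by rewrite ltNge; apply/negP => /regd; lra.
have : delta * r < l * dmax x * r.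
  by rewrite ltr_pM2r //; apply: lt_le_trans dmax_y (dmax_segment_le x e l Ee _); rewrite l0.
rewrite mulrAC lr => lt_delta.
rewrite mulrAC ler_pdivlMr //; have := dmax_ge0 x; nra.
Qed.

Lemma boundedly_regular_regular :
  bounded_set E -> boundedly_regular A B v -> regular A B v.
Proof.
move=> [M [_ EM]] breg eps eps0.
have {}EM s : E s -> `|s| <= M + 1 by apply: EM; lra.
have [e Ee] := E0.
have M1 : 0 <= M + 1 by apply: le_trans (EM _ Ee).
pose rho := 2 * (M + 1) + eps + 1.
have rho0 : 0 < rho by rewrite /rho; lra.
have [delta delta0 bregd] := breg _ (bounded_norm_ball e rho) eps eps0.
exists delta => // x dmax_x.
have [/bregd/(_ dmax_x) //|far] := leP `|x - e| rho.
set r := `|x - e| in far.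
have r0 : 0 < r by lra.
pose l := rho / r.
have l01 : 0 <= l <= 1.
  by rewrite /l divr_ge0 ?(ltW rho0) ?(ltW r0) //= ler_pdivrMr // mul1r (ltW far).
set y := l *: x + (1 - l) *: e.
have /andP[l0 l1] := l01.
have ye : `|y - e| = rho by rewrite segment_subr normrZ ger0_norm // mulfVK // lt0r_neq0.
have yE : dist y E <= eps.
  apply: bregd; first by rewrite /= ye.
  apply: le_trans (dmax_segment_le x e l Ee l01) _.
  by apply: le_trans dmax_x; rewrite ler_piMl ?dmax_ge0.
have : eps + 1 <= dist y E.
  apply: dist_ge => // s Es.
  have := ler_distD s y e; have := ler_normB s e; have := EM _ Es; have := EM _ Ee.
  rewrite ye /rho; lra.
lra.
Qed.

End Regularity.

Theorem proposition3p2 (R : realType) (V : completeNormedModType R)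
  (ip : V -> V -> R) (A B : set V) (v : V) :
  hilbert_inner ip ->
  closed A -> convex A -> A !=set0 ->
  closed B -> convex B -> B !=set0 ->
  setE A B !=set0 -> setF A B !=set0 ->
  is_displacement A B v ->
  [/\ (linearly_regular_away A B v <-> regular A B v),
      (regular A B v -> boundedly_regular A B v)
    & (bounded_set (setE A B) -> boundedly_regular A B v -> regular A B v)].
Proof.
move=> ipH _ cA A0 _ cB B0 E0 _ displacement_v.
have dist_setE_translate := setE_dist_translate_neg ipH cA cB B0 displacement_v.
split; first split.
- exact: linearly_regular_away_regular.
- exact: regular_linearly_regular_away cA cB A0 B0 E0 dist_setE_translate.
- exact: regular_boundedly_regular.
- exact: boundedly_regular_regular cA cB A0 B0 E0 dist_setE_translate.
Qed.
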